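(* Let $0<D<1$ be a constant as in the following statement: for all sufficiently large $k$, with $m=\lfloor D(2k+1)\rfloor$, there is an orthonormal set $\{u_i\}_{i=1}^m\subset\mathcal{SH}_k$ with $\|u_i\|_{L^p}\ge\frac12 C_pk^{\sigma(p)}$ for all $i$ and all $2<p\le6$ (e.g. any $D$ with $(7+1296D)e^{-1/(72D)}\le 1/25$, such as $D=1/400$). Then for all sufficiently large $k$ there exists an orthonormal basis $\{u_i\}_{i=1}^{2k+1}$ of $\mathcal{SH}_k$ such that $$\frac1{2k+1}\sum_{i=1}^{2k+1}\|u_i\|_{L^p(\mathbb S^2)}\ \ge\ \frac D3\, C_pk^{\sigma(p)}\qquad\text{for all } 2<p\le 6.$$
   Context: $\mathbb S^2\subset\mathbb R^3$ is the round unit sphere; $\mathcal{SH}_k$ is the $(2k+1)$-dimensional space of spherical harmonics of degree $k$ (eigenfunctions of $-\Delta$ with eigenvalue $k(k+1)$), with the $L^2(\mathbb S^2)$ inner product. With coordinates $x=(\sin\phi\cos\theta,\sin\phi\sin\theta,\cos\phi)$, the Gaussian beam is $Q_k(\phi,\theta)=C_kP_k^k(\cos\phi)e^{ik\theta}$, $L^2$-normalized; $\sigma(p)=\tfrac12(\tfrac12-\tfrac1p)$, and $C_pk^{\sigma(p)}$ denotes $\|Q_k\|_{L^p(\mathbb S^2)}$. *)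

From Stdlib Require Import Reals Lra.
From Coquelicot Require Import Coquelicot.
Open Scope R_scope.

Fixpoint csum (n : nat) (f : nat -> C) : C :=
  match n with O => RtoC 0 | S n' => Cplus (csum n' f) (f n') end.
Fixpoint rsum (n : nat) (f : nat -> R) : R :=
  match n with O => 0 | S n' => rsum n' f + f n' end.

Definition rpow (x y : R) : R := if Rle_dec x 0 then 0 else Rpower x y.

Definition sph (phi theta : R) : R * R * R :=
  (sin phi * cos theta, sin phi * sin theta, cos phi).

Definition sph_int (g : R -> R -> R) : R :=
  RInt (fun theta => RInt (fun phi => g phi theta * sin phi) 0 PI) 0 (2 * PI).

Definition Lp_norm_sph (p : R) (g : R -> R -> C) : R :=
  rpow (sph_int (fun phi theta => rpow (Cmod (g phi theta)) p)) (/ p).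

Definition fun3 := R -> R -> R -> C.
Definition on_sph (f : fun3) : R -> R -> C :=
  fun phi theta => let '(x, y, z) := sph phi theta in f x y z.
Definition Lp_norm (p : R) (f : fun3) : R := Lp_norm_sph p (on_sph f).

Definition inner (f g : fun3) : C :=
  (sph_int (fun phi theta => Re (Cmult (on_sph f phi theta) (Cconj (on_sph g phi theta)))),
   sph_int (fun phi theta => Im (Cmult (on_sph f phi theta) (Cconj (on_sph g phi theta))))).

Definition lap3 (g : R -> R -> R -> R) (x y z : R) : R :=
  Derive (fun t => Derive (fun s => g s y z) t) x
  + Derive (fun t => Derive (fun s => g x s z) t) y
  + Derive (fun t => Derive (fun s => g x y s) t) z.

Definition homog_poly (k : nat) (f : fun3) : Prop :=
  exists c : nat -> nat -> C, forall x y z,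
    f x y z = csum (S k) (fun a => csum (S (k - a)) (fun b =>
       Cmult (c a b) (RtoC (x ^ a * y ^ b * z ^ (k - a - b))))).

(* SH_k: (restrictions to S^2 of) homogeneous harmonic polynomials of degree k. *)
Definition SH (k : nat) (f : fun3) : Prop :=
  homog_poly k f /\
  forall x y z, lap3 (fun a b c => Re (f a b c)) x y z = 0 /\
                lap3 (fun a b c => Im (f a b c)) x y z = 0.

Definition kron (i j : nat) : C := if Nat.eqb i j then RtoC 1 else RtoC 0.

Definition orthonormal (n : nat) (u : nat -> fun3) : Prop :=
  forall i j, (i < n)%nat -> (j < n)%nat -> inner (u i) (u j) = kron i j.

Definition ONB_SH (k : nat) (u : nat -> fun3) : Prop :=
  (forall i, (i < 2 * k + 1)%nat -> SH k (u i)) /\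
  orthonormal (2 * k + 1) u /\
  (forall f, SH k f -> exists a : nat -> C, forall x y z,
      f x y z = csum (2 * k + 1) (fun i => Cmult (a i) (u i x y z))).

(* Associated Legendre function P_k^k(t) = (-1)^k (2k-1)!! (1-t^2)^{k/2}. *)
Fixpoint dfact_odd (k : nat) : R :=
  match k with O => 1 | S k' => INR (2 * k' + 1) * dfact_odd k' end.
Definition Pkk (k : nat) (t : R) : R :=
  (-1) ^ k * dfact_odd k * (sqrt (1 - t ^ 2)) ^ k.

Definition Qk_raw (k : nat) : R -> R -> C :=
  fun phi theta => Cmult (RtoC (Pkk k (cos phi)))
                         (cos (INR k * theta), sin (INR k * theta)).
Definition Ck (k : nat) : R := / Lp_norm_sph 2 (Qk_raw k).
Definition Qk (k : nat) : R -> R -> C :=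
  fun phi theta => Cmult (RtoC (Ck k)) (Qk_raw k phi theta).

Definition mD (D : R) (k : nat) : nat := Z.to_nat (Int_part (D * INR (2 * k + 1))).

(** Extend the given orthonormal set [u_1, ..., u_m], [m = floor (D (2k+1))], by Gram-Schmidt
    to an orthonormal basis of [SH_k]. The basis contains the [m] functions with
    [||u_i||_p >= C_p k^sigma(p) / 2], and [m >= 2/3 D (2k+1)] once [D (2k+1) >= 3], so the
    average of the [L^p] norms is at least [D/3 C_p k^sigma(p)].

    The work is in showing that [SH_k], as the space of harmonic homogeneous polynomials with
    the [L^2(S^2)] product, is an inner product space of dimension exactly [2k+1]. The product
    is positive definite because a homogeneous polynomial vanishing on the sphere vanishes. In
    the coefficients [r_ab] of [x^a y^b z^(k-a-b)], harmonicity is a recursion that determines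
    [r] from its rows [a = 0] and [a = 1], which yields [2k+1] independent spanning harmonics;
    Bessel's inequality then shows that every orthonormal basis has [2k+1] elements. *)

From Stdlib Require Import Reals Lra Lia ZArith FunctionalExtensionality.
From Coquelicot Require Import Coquelicot.
Open Scope R_scope.

Lemma C_ext (a b : C) : fst a = fst b -> snd a = snd b -> a = b.
Proof. destruct a, b; simpl; intros -> ->; reflexivity. Qed.

Ltac csimpl := cbn [fst snd RtoC Cplus Cmult Cconj Re Im].
Ltac cring := apply C_ext; csimpl; ring.

Lemma fun3_ext (f g : fun3) : (forall x y z, f x y z = g x y z) -> f = g.
Proof.
  intros H; do 3 (apply functional_extensionality; intro); apply H.
Qed.

Lemma csum_ext n f g : (forall i, (i < n)%nat -> f i = g i) -> csum n f = csum n g.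
Proof.
  induction n as [|n IH]; simpl; intros H; auto.
  rewrite IH by (intros; apply H; lia); rewrite H by lia; reflexivity.
Qed.

Lemma rsum_ext n f g : (forall i, (i < n)%nat -> f i = g i) -> rsum n f = rsum n g.
Proof.
  induction n as [|n IH]; simpl; intros H; auto.
  rewrite IH by (intros; apply H; lia); rewrite H by lia; reflexivity.
Qed.

Lemma Re_csum n f : fst (csum n f) = rsum n (fun i => fst (f i)).
Proof. induction n as [|n IH]; simpl; auto. rewrite IH; reflexivity. Qed.

Lemma Im_csum n f : snd (csum n f) = rsum n (fun i => snd (f i)).
Proof. induction n as [|n IH]; simpl; auto. rewrite IH; reflexivity. Qed.

Lemma csum_add n f g : csum n (fun i => Cplus (f i) (g i)) = Cplus (csum n f) (csum n g).
Proof. induction n as [|n IH]; simpl; [cring|]. rewrite IH; cring. Qed.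

Lemma csum_scal n c f : csum n (fun i => Cmult c (f i)) = Cmult c (csum n f).
Proof. induction n as [|n IH]; simpl; [cring|]. rewrite IH; cring. Qed.

Lemma rsum_add n f g : rsum n (fun i => f i + g i) = rsum n f + rsum n g.
Proof. induction n as [|n IH]; simpl; [ring|]. rewrite IH; ring. Qed.

Lemma rsum_scal n c f : rsum n (fun i => c * f i) = c * rsum n f.
Proof. induction n as [|n IH]; simpl; [ring|]. rewrite IH; ring. Qed.

Lemma rsum_eq0 n f : (forall i, (i < n)%nat -> f i = 0) -> rsum n f = 0.
Proof.
  induction n as [|n IH]; simpl; intros H; auto.
  rewrite IH by (intros; apply H; lia); rewrite H by lia; ring.
Qed.

Lemma csum_eq0 n f : (forall i, (i < n)%nat -> f i = RtoC 0) -> csum n f = RtoC 0.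
Proof.
  induction n as [|n IH]; simpl; intros H; auto.
  rewrite IH by (intros; apply H; lia); rewrite H by lia; cring.
Qed.

Lemma rsum_le n f g : (forall i, (i < n)%nat -> f i <= g i) -> rsum n f <= rsum n g.
Proof.
  induction n as [|n IH]; simpl; intros H; [lra|].
  assert (rsum n f <= rsum n g) by (apply IH; intros; apply H; lia).
  assert (f n <= g n) by (apply H; lia). lra.
Qed.

Lemma rsum_le_length m n f : (m <= n)%nat -> (forall i, 0 <= f i) -> rsum m f <= rsum n f.
Proof.
  induction 1 as [|n _ IH]; intros Hf; simpl; [lra|].
  specialize (IH Hf). specialize (Hf n). lra.
Qed.

Lemma rsum_const n c : rsum n (fun _ => c) = INR n * c.
Proof. induction n as [|n IH]; simpl rsum; [simpl; ring|]. rewrite IH, S_INR; ring. Qed.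

Lemma rsum_swap n m F :
  rsum n (fun i => rsum m (fun j => F i j)) = rsum m (fun j => rsum n (fun i => F i j)).
Proof.
  induction n as [|n IH]; simpl; [rewrite rsum_eq0; auto|].
  rewrite IH, <- rsum_add; reflexivity.
Qed.

Lemma csum_swap n m F :
  csum n (fun i => csum m (fun j => F i j)) = csum m (fun j => csum n (fun i => F i j)).
Proof.
  induction n as [|n IH]; simpl; [rewrite csum_eq0; auto|].
  rewrite IH, <- csum_add; reflexivity.
Qed.

Lemma rsum_shift n f : rsum (S n) f = f O + rsum n (fun i => f (S i)).
Proof.
  induction n as [|n IH]; [simpl; ring|].
  change (rsum (S (S n)) f) with (rsum (S n) f + f (S n)). rewrite IH; simpl; ring.
Qed.

Lemma rsum_trunc n m f : (m <= n)%nat -> (forall i, (m <= i)%nat -> f i = 0) ->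
  rsum n f = rsum m f.
Proof. induction 1 as [|n Hmn IH]; intros Hf; auto. simpl. rewrite IH, Hf by auto; ring. Qed.

Lemma csum_trunc n m f : (m <= n)%nat -> (forall i, (m <= i)%nat -> f i = RtoC 0) ->
  csum n f = csum m f.
Proof. induction 1 as [|n Hmn IH]; intros Hf; auto. simpl. rewrite IH, Hf by auto; cring. Qed.

Lemma rsum_delta n j g : (j < n)%nat -> rsum n (fun i => if Nat.eqb i j then g i else 0) = g j.
Proof.
  induction n as [|n IH]; intros Hj; [lia|]. simpl.
  destruct (Nat.eq_dec j n) as [->|Hjn].
  - rewrite rsum_eq0, Nat.eqb_refl; [ring|].
    intros i Hi.
    replace (Nat.eqb i n) with false by (symmetry; apply Nat.eqb_neq; lia); reflexivity.
  - rewrite IH by lia. replace (Nat.eqb n j) with false by (symmetry; apply Nat.eqb_neq; lia); ring.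
Qed.

Lemma csum_kron n a l : (l < n)%nat -> csum n (fun i => Cmult (a i) (kron i l)) = a l.
Proof.
  intros Hl. transitivity ((rsum n (fun i => if Nat.eqb i l then fst (a i) else 0)),
                                 rsum n (fun i => if Nat.eqb i l then snd (a i) else 0)).
  - apply C_ext; [rewrite Re_csum | rewrite Im_csum]; apply rsum_ext; intros i _;
      unfold kron; destruct (Nat.eqb i l); simpl; ring.
  - rewrite !rsum_delta by exact Hl. destruct (a l); reflexivity.
Qed.

Lemma Cconj_csum n F : Cconj (csum n F) = csum n (fun i => Cconj (F i)).
Proof. induction n as [|n IH]; simpl; [cring|]. rewrite <- IH; cring. Qed.

(** * Integration over the sphere *)

Definition cont (f : R -> R) := forall x, continuous f x.

Lemma cont_const c : cont (fun _ => c).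
Proof. intros x; apply continuous_const. Qed.

Lemma cont_mult f g : cont f -> cont g -> cont (fun x => f x * g x).
Proof. intros Hf Hg x. exact (continuous_mult f g x (Hf x) (Hg x)). Qed.

Lemma cont_plus f g : cont f -> cont g -> cont (fun x => f x + g x).
Proof. intros Hf Hg x. exact (continuous_plus f g x (Hf x) (Hg x)). Qed.

Lemma cont_sin : cont sin.
Proof. intros x. apply continuity_pt_filterlim, continuity_sin. Qed.

Lemma cont_cos : cont cos.
Proof. intros x. apply continuity_pt_filterlim, continuity_cos. Qed.

Lemma cont_ext f g : (forall x, f x = g x) -> cont f -> cont g.
Proof. intros H Hf x. exact (continuous_ext f g x H (Hf x)). Qed.

Lemma cont_pow n : cont (fun s => s ^ n).
Proof.
  induction n; simpl; [apply cont_const|].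
  apply cont_mult; auto. intros x; apply continuous_id.
Qed.

Lemma cont_rsum n F : (forall i, (i < n)%nat -> cont (F i)) ->
  cont (fun s => rsum n (fun i => F i s)).
Proof.
  induction n as [|n IH]; intros H; simpl; [apply cont_const|].
  apply cont_plus; [apply IH; intros; apply H; lia | apply H; lia].
Qed.

Lemma ex_RInt_cont f a b : cont f -> ex_RInt f a b.
Proof. intros Hf. apply (@ex_RInt_continuous R_CompleteNormedModule). intros; apply Hf. Qed.

Lemma RInt_plus_cont f g a b : cont f -> cont g ->
  RInt (fun x => f x + g x) a b = RInt f a b + RInt g a b.
Proof. intros Hf Hg. exact (RInt_plus f g a b (ex_RInt_cont f a b Hf) (ex_RInt_cont g a b Hg)). Qed.

Lemma RInt_scal_cont f c a b : cont f -> RInt (fun x => c * f x) a b = c * RInt f a b.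
Proof. intros Hf. exact (RInt_scal f a b c (ex_RInt_cont f a b Hf)). Qed.

Lemma RInt_gt_0_at_point g a b t0 : a < t0 < b -> cont g ->
  (forall x, a <= x <= b -> 0 <= g x) -> 0 < g t0 -> 0 < RInt g a b.
Proof.
  intros [Ha Hb] Hg Hnn Hpos.
  assert (Hc : continuity_pt g t0) by (apply continuity_pt_filterlim; apply Hg).
  destruct (Hc (g t0 / 2)) as [alp [Halp Hal]]; [lra|].
  assert (Hloc : forall x, Rabs (x - t0) < alp -> 0 < g x).
  { intros x Hx. destruct (Req_dec x t0) as [->|Hne]; auto.
    assert (Rabs (g x - g t0) < g t0 / 2) by (apply Hal; repeat split; auto).
    apply Rabs_def2 in H. lra. }
  set (d := Rmin (alp/2) (Rmin ((t0-a)/2) ((b-t0)/2))).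
  assert (Hd0 : 0 < d) by (unfold d; repeat apply Rmin_pos; lra).
  assert (Hd1 : d <= alp/2) by apply Rmin_l.
  assert (Hd2 : d <= (t0-a)/2) by (eapply Rle_trans; [apply Rmin_r|apply Rmin_l]).
  assert (Hd3 : d <= (b-t0)/2) by (eapply Rle_trans; [apply Rmin_r|apply Rmin_r]).
  assert (Ig := fun u v => ex_RInt_cont g u v Hg).
  rewrite <- (RInt_Chasles g a (t0-d) b (Ig _ _) (Ig _ _)).
  rewrite <- (RInt_Chasles g (t0-d) (t0+d) b (Ig _ _) (Ig _ _)).
  change plus with Rplus; simpl.
  assert (0 <= RInt g a (t0-d)) by (apply RInt_ge_0; auto; [lra | intros; apply Hnn; lra]).
  assert (0 <= RInt g (t0+d) b) by (apply RInt_ge_0; auto; [lra | intros; apply Hnn; lra]).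
  assert (0 < RInt g (t0-d) (t0+d)).
  { apply RInt_gt_0; [lra | | intros; apply Hg]. intros; apply Hloc, Rabs_def1; lra. }
  lra.
Qed.

(** Integrands coming from polynomials have this form; for them the inner integral of
    [sph_int] is continuous in [theta], which makes [sph_int] linear and positive. *)
Inductive separable : (R -> R -> R) -> Prop :=
  | separable_prod u v : cont u -> cont v -> separable (fun p t => u p * v t)
  | separable_plus F G : separable F -> separable G -> separable (fun p t => F p t + G p t)
  | separable_ext F G : (forall p t, F p t = G p t) -> separable F -> separable G.

Lemma separable_const c : separable (fun _ _ => c).
Proof.
  apply (separable_ext (fun p t => (fun _ => c) p * (fun _ => 1) t)); [intros; ring|].
  apply separable_prod; apply cont_const.
Qed.

Lemma separable_phi u : cont u -> separable (fun p _ => u p).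
Proof.
  intros Hu. apply (separable_ext (fun p t => u p * (fun _ => 1) t)); [intros; ring|].
  apply separable_prod; auto using cont_const.
Qed.

Lemma separable_theta v : cont v -> separable (fun _ t => v t).
Proof.
  intros Hv. apply (separable_ext (fun p t => (fun _ => 1) p * v t)); [intros; ring|].
  apply separable_prod; auto using cont_const.
Qed.

Lemma separable_mult F G : separable F -> separable G -> separable (fun p t => F p t * G p t).
Proof.
  intros HF; induction HF as [u v Hu Hv|F1 F2 _ IH1 _ IH2|F1 F2 E _ IH]; intros HG.
  - induction HG as [u' v' Hu' Hv'|G1 G2 _ IH1 _ IH2|G1 G2 E _ IH].
    + apply (separable_ext (fun p t => (u p * u' p) * (v t * v' t))); [intros; ring|].
      apply separable_prod; apply cont_mult; auto.
    + eapply separable_ext; [|apply separable_plus; [exact IH1 | exact IH2]]. intros; simpl; ring.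
    + eapply separable_ext; [|exact IH]. intros; simpl; rewrite E; reflexivity.
  - eapply separable_ext; [|apply separable_plus; [exact (IH1 HG) | exact (IH2 HG)]].
    intros; simpl; ring.
  - eapply separable_ext; [|exact (IH HG)]. intros; simpl; rewrite E; reflexivity.
Qed.

Lemma separable_scal c F : separable F -> separable (fun p t => c * F p t).
Proof. intros H. apply separable_mult; [apply separable_const | exact H]. Qed.

Lemma separable_pow F n : separable F -> separable (fun p t => F p t ^ n).
Proof. intros H. induction n; simpl; [apply separable_const | apply separable_mult; auto]. Qed.

Lemma separable_rsum n F : (forall i, (i < n)%nat -> separable (F i)) ->
  separable (fun p t => rsum n (fun i => F i p t)).
Proof.
  induction n as [|n IH]; intros H; simpl; [apply separable_const|].
  apply separable_plus; [apply IH; intros; apply H; lia | apply H; lia].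
Qed.

Definition sph_integrable (F : R -> R -> R) :=
  (forall t, cont (fun p => F p t)) /\ cont (fun t => RInt (fun p => F p t * sin p) 0 PI).

Lemma separable_integrable F : separable F -> sph_integrable F.
Proof.
  induction 1 as [u v Hu Hv|F G _ [HF1 HF2] _ [HG1 HG2]|F G E _ [HF1 HF2]]; split.
  - intros t; apply cont_mult; auto using cont_const.
  - apply (cont_ext (fun t => v t * RInt (fun p => u p * sin p) 0 PI)).
    + intros t. rewrite <- RInt_scal_cont by (apply cont_mult; auto using cont_sin).
      apply RInt_ext; intros; simpl; ring.
    + apply cont_mult; auto using cont_const.
  - intros t; apply cont_plus; auto.
  - apply (cont_ext (fun t => RInt (fun p => F p t * sin p) 0 PI
                                + RInt (fun p => G p t * sin p) 0 PI)).
    + intros t. rewrite <- RInt_plus_cont by (apply cont_mult; auto using cont_sin).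
      apply RInt_ext; intros; simpl; ring.
    + apply cont_plus; auto.
  - intros t; apply (cont_ext (fun p => F p t)); auto.
  - apply (cont_ext (fun t => RInt (fun p => F p t * sin p) 0 PI)); auto.
    intros t; apply RInt_ext; intros; rewrite E; reflexivity.
Qed.

Lemma sph_int_ext F G : (forall p t, F p t = G p t) -> sph_int F = sph_int G.
Proof.
  intros H. unfold sph_int. apply RInt_ext; intros. apply RInt_ext; intros. rewrite H; auto.
Qed.

Lemma sph_int_plus F G : sph_integrable F -> sph_integrable G ->
  sph_int (fun p t => F p t + G p t) = sph_int F + sph_int G.
Proof.
  intros [F1 F2] [G1 G2]. unfold sph_int. rewrite <- RInt_plus_cont by auto.
  apply RInt_ext; intros t _. rewrite <- RInt_plus_cont by (apply cont_mult; auto using cont_sin).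
  apply RInt_ext; intros; simpl; ring.
Qed.

Lemma sph_int_scal c F : sph_integrable F -> sph_int (fun p t => c * F p t) = c * sph_int F.
Proof.
  intros [F1 F2]. unfold sph_int. rewrite <- RInt_scal_cont by auto.
  apply RInt_ext; intros t _. rewrite <- RInt_scal_cont by (apply cont_mult; auto using cont_sin).
  apply RInt_ext; intros; simpl; ring.
Qed.

Lemma sph_int0 : sph_int (fun _ _ => 0) = 0.
Proof.
  rewrite (sph_int_ext _ (fun p t => 0 * (fun _ _ => 0) p t)) by (intros; ring).
  rewrite sph_int_scal; [ring | apply separable_integrable, separable_const].
Qed.

Lemma sph_int_ge0 F : sph_integrable F -> (forall p t, 0 <= F p t) -> 0 <= sph_int F.
Proof.
  intros [F1 F2] Hnn. pose proof PI_RGT_0. unfold sph_int.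
  apply RInt_ge_0; [lra | apply ex_RInt_cont; auto |]. intros t _.
  apply RInt_ge_0; [lra | apply ex_RInt_cont, cont_mult; auto using cont_sin |].
  intros x Hx. apply Rmult_le_pos; auto. apply sin_ge_0; lra.
Qed.

Lemma sph_int_gt0 F p0 t0 : sph_integrable F -> (forall p t, 0 <= F p t) ->
  0 < p0 < PI -> 0 < t0 < 2 * PI -> 0 < F p0 t0 -> 0 < sph_int F.
Proof.
  intros [F1 F2] Hnn Hp Ht Hpos.
  assert (Hw : forall t x, 0 <= x <= PI -> 0 <= F x t * sin x).
  { intros t x Hx. apply Rmult_le_pos; auto. apply sin_ge_0; lra. }
  apply (RInt_gt_0_at_point _ _ _ t0); auto.
  - intros t _. apply RInt_ge_0; [lra | apply ex_RInt_cont, cont_mult; auto using cont_sin |].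
    intros x Hx; apply Hw; lra.
  - apply (RInt_gt_0_at_point _ _ _ p0); auto.
    + apply cont_mult; auto using cont_sin.
    + apply Rmult_lt_0_compat; auto. apply sin_gt_0; lra.
Qed.

(** * Homogeneous polynomials and the [L^2] inner product *)

Definition hpoly (k : nat) (c : nat -> nat -> C) : fun3 := fun x y z =>
  csum (S k) (fun a => csum (S (k - a)) (fun b =>
    Cmult (c a b) (RtoC (x ^ a * y ^ b * z ^ (k - a - b))))).

Definition hreal (k : nat) (r : nat -> nat -> R) (x y z : R) : R :=
  rsum (S k) (fun a => rsum (S (k - a)) (fun b => r a b * (x ^ a * y ^ b * z ^ (k - a - b)))).

Definition fadd (f g : fun3) : fun3 := fun x y z => Cplus (f x y z) (g x y z).
Definition fscal (c : C) (f : fun3) : fun3 := fun x y z => Cmult c (f x y z).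
Definition combo (n : nat) (a : nat -> C) (e : nat -> fun3) : fun3 :=
  fun x y z => csum n (fun i => Cmult (a i) (e i x y z)).
Definition fzero : fun3 := fun _ _ _ => RtoC 0.

Lemma on_sphE f p t : on_sph f p t = f (sin p * cos t) (sin p * sin t) (cos p).
Proof. reflexivity. Qed.

Lemma homog_poly_hpoly k f : homog_poly k f -> exists c, forall x y z, f x y z = hpoly k c x y z.
Proof. exact (fun H => H). Qed.

Lemma Re_hpoly k c x y z : fst (hpoly k c x y z) = hreal k (fun a b => fst (c a b)) x y z.
Proof.
  unfold hpoly, hreal. rewrite Re_csum. apply rsum_ext; intros.
  rewrite Re_csum. apply rsum_ext; intros. simpl; ring.
Qed.

Lemma Im_hpoly k c x y z : snd (hpoly k c x y z) = hreal k (fun a b => snd (c a b)) x y z.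
Proof.
  unfold hpoly, hreal. rewrite Im_csum. apply rsum_ext; intros.
  rewrite Im_csum. apply rsum_ext; intros. simpl; ring.
Qed.

Lemma hpoly_add k c d x y z :
  Cplus (hpoly k c x y z) (hpoly k d x y z) = hpoly k (fun a b => Cplus (c a b) (d a b)) x y z.
Proof.
  unfold hpoly. rewrite <- csum_add. apply csum_ext; intros.
  rewrite <- csum_add. apply csum_ext; intros; cring.
Qed.

Lemma hpoly_scal k e c x y z :
  Cmult e (hpoly k c x y z) = hpoly k (fun a b => Cmult e (c a b)) x y z.
Proof.
  unfold hpoly. rewrite <- csum_scal. apply csum_ext; intros.
  rewrite <- csum_scal. apply csum_ext; intros; cring.
Qed.

Lemma hpoly_homog k c t x y z :
  hpoly k c (t * x) (t * y) (t * z) = Cmult (RtoC (t ^ k)) (hpoly k c x y z).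
Proof.
  unfold hpoly. rewrite <- csum_scal. apply csum_ext; intros a Ha.
  rewrite <- csum_scal. apply csum_ext; intros b Hb.
  replace (t ^ k) with (t ^ a * t ^ b * t ^ (k - a - b)) by (rewrite <- !pow_add; f_equal; lia).
  rewrite !Rpow_mult_distr. cring.
Qed.

Lemma homog_poly_add k f g : homog_poly k f -> homog_poly k g -> homog_poly k (fadd f g).
Proof.
  intros [c Hc] [d Hd]. exists (fun a b => Cplus (c a b) (d a b)); intros.
  unfold fadd; rewrite Hc, Hd. apply hpoly_add.
Qed.

Lemma homog_poly_scal k e f : homog_poly k f -> homog_poly k (fscal e f).
Proof.
  intros [c Hc]. exists (fun a b => Cmult e (c a b)); intros.
  unfold fscal; rewrite Hc. apply hpoly_scal.
Qed.

Lemma homog_poly_zero k : homog_poly k fzero.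
Proof.
  exists (fun _ _ => RtoC 0); intros.
  symmetry; apply csum_eq0; intros; apply csum_eq0; intros; cring.
Qed.

Lemma homog_poly_combo k n a e : (forall i, (i < n)%nat -> homog_poly k (e i)) ->
  homog_poly k (combo n a e).
Proof.
  induction n as [|n IH]; intros H; [apply homog_poly_zero|].
  change (homog_poly k (fadd (combo n a e) (fscal (a n) (e n)))).
  apply homog_poly_add; [apply IH; intros; apply H; lia | apply homog_poly_scal, H; lia].
Qed.

Lemma homog_poly_homog k f t x y z : homog_poly k f ->
  f (t * x) (t * y) (t * z) = Cmult (RtoC (t ^ k)) (f x y z).
Proof. intros [c Hc]%homog_poly_hpoly. rewrite !Hc. apply hpoly_homog. Qed.

Lemma cont_hreal_y k r x z : cont (fun s => hreal k r x s z).
Proof.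
  apply (cont_rsum _ (fun a s => rsum (S (k - a)) (fun b =>
    r a b * (x ^ a * s ^ b * z ^ (k - a - b))))).
  intros a _. apply (cont_rsum _ (fun b s => r a b * (x ^ a * s ^ b * z ^ (k - a - b)))).
  intros b _. repeat apply cont_mult; auto using cont_const, cont_pow.
Qed.

Lemma separable_hreal_sph k r :
  separable (fun p t => hreal k r (sin p * cos t) (sin p * sin t) (cos p)).
Proof.
  assert (Hsin := separable_phi _ cont_sin).
  apply (separable_rsum _ (fun a p t => rsum _ (fun b => r a b *
    ((sin p * cos t) ^ a * (sin p * sin t) ^ b * cos p ^ (k - a - b))))); intros a _.
  apply (separable_rsum _ (fun b p t => r a b *
    ((sin p * cos t) ^ a * (sin p * sin t) ^ b * cos p ^ (k - a - b)))); intros b _.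
  repeat apply separable_mult; try apply separable_pow; try apply separable_mult;
    auto using separable_const, separable_phi, separable_theta, cont_sin, cont_cos.
Qed.

Lemma separable_Re_sph k f : homog_poly k f -> separable (fun p t => fst (on_sph f p t)).
Proof.
  intros [c Hc]%homog_poly_hpoly.
  eapply separable_ext; [|apply (separable_hreal_sph k (fun a b => fst (c a b)))].
  intros; rewrite on_sphE, Hc, Re_hpoly; reflexivity.
Qed.

Lemma separable_Im_sph k f : homog_poly k f -> separable (fun p t => snd (on_sph f p t)).
Proof.
  intros [c Hc]%homog_poly_hpoly.
  eapply separable_ext; [|apply (separable_hreal_sph k (fun a b => snd (c a b)))].
  intros; rewrite on_sphE, Hc, Im_hpoly; reflexivity.
Qed.

Definition inner_re (f g : fun3) (p t : R) : R :=
  fst (on_sph f p t) * fst (on_sph g p t) + snd (on_sph f p t) * snd (on_sph g p t).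
Definition inner_im (f g : fun3) (p t : R) : R :=
  snd (on_sph f p t) * fst (on_sph g p t) - fst (on_sph f p t) * snd (on_sph g p t).

Lemma innerE f g : inner f g = (sph_int (inner_re f g), sph_int (inner_im f g)).
Proof.
  unfold inner. f_equal; apply sph_int_ext; intros; unfold inner_re, inner_im; simpl; ring.
Qed.

Arguments inner : simpl never.

Lemma cont_eq0_at_0 g : cont g -> (forall s, s <> 0 -> g s = 0) -> g 0 = 0.
Proof.
  intros Hg Hz. destruct (Req_dec (g 0) 0) as [|Hne]; auto. exfalso.
  assert (Hc : continuity_pt g 0) by (apply continuity_pt_filterlim; apply Hg).
  apply Rabs_pos_lt in Hne.
  destruct (Hc (Rabs (g 0) / 2)) as [alp [Halp Hal]]; [lra|].
  assert (H : Rabs (g (alp / 2) - g 0) < Rabs (g 0) / 2).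
  { apply Hal. split; [split; [exact I | lra]|]. simpl; unfold R_dist.
    rewrite Rminus_0_r, Rabs_right; lra. }
  rewrite Hz, Rminus_0_l, Rabs_Ropp in H by lra. lra.
Qed.

Lemma acos_interior u : -1 < u < 1 -> 0 < acos u < PI.
Proof.
  intros Hu. pose proof (acos_bound u). pose proof (cos_acos u ltac:(lra)) as Hc. split.
  - destruct (Req_dec (acos u) 0) as [E|E]; [rewrite E, cos_0 in Hc|]; lra.
  - destruct (Req_dec (acos u) PI) as [E|E]; [rewrite E, cos_PI in Hc|]; lra.
Qed.

Lemma sph_coordinates x y z : 0 < y -> exists r phi theta, 0 < r /\ 0 < phi < PI /\
  0 < theta < 2 * PI /\ x = r * (sin phi * cos theta) /\ y = r * (sin phi * sin theta) /\
  z = r * cos phi.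
Proof.
  intros Hy.
  assert (Hq : 0 < x*x+y*y) by nra. assert (Hr : 0 < x*x+y*y+z*z) by nra.
  set (rho := sqrt (x*x+y*y)). set (r := sqrt (x*x+y*y+z*z)).
  assert (Hrho : 0 < rho) by (apply sqrt_lt_R0; auto).
  assert (Hr0 : 0 < r) by (apply sqrt_lt_R0; auto).
  assert (Hrho2 : rho * rho = x*x+y*y) by (apply sqrt_sqrt; lra).
  assert (Hr2 : r * r = x*x+y*y+z*z) by (apply sqrt_sqrt; lra).
  set (u := x / rho). set (w := z / r).
  assert (Hxu : x = u * rho) by (unfold u; field; lra).
  assert (Hzw : z = w * r) by (unfold w; field; lra).
  assert (Hu : -1 < u < 1) by (assert (u * u < 1) by nra; nra).
  assert (Hw : -1 < w < 1) by (assert (w * w < 1) by nra; nra).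
  exists r, (acos w), (acos u).
  assert (Hth := acos_interior u Hu). assert (Hph := acos_interior w Hw).
  rewrite !cos_acos by lra. rewrite !sin_acos by lra.
  replace (1 - u²) with ((y/rho)²) by (unfold Rsqr, u; field_simplify_eq; [nra | lra]).
  replace (1 - w²) with ((rho/r)²) by (unfold Rsqr, w; field_simplify_eq; [nra | lra]).
  rewrite !sqrt_Rsqr by (apply Rlt_le, Rdiv_lt_0_compat; lra).
  assert (PI < 2 * PI) by (pose proof PI_RGT_0; lra).
  repeat split; try lra; unfold u, w; field; lra.
Qed.

Section InnerProduct.

Variable k : nat.

Lemma separable_inner_re f g : homog_poly k f -> homog_poly k g -> separable (inner_re f g).
Proof.
  intros Hf Hg. unfold inner_re.
  apply separable_plus; apply separable_mult; eauto using separable_Re_sph, separable_Im_sph.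
Qed.

Lemma separable_inner_im f g : homog_poly k f -> homog_poly k g -> separable (inner_im f g).
Proof.
  intros Hf Hg. unfold inner_im.
  apply (separable_ext (fun p t => snd (on_sph f p t) * fst (on_sph g p t)
                                   + (-1) * (fst (on_sph f p t) * snd (on_sph g p t))));
    [intros; ring|].
  apply separable_plus; repeat apply separable_mult;
    eauto using separable_Re_sph, separable_Im_sph, separable_const.
Qed.

#[local] Hint Resolve separable_integrable separable_scal separable_inner_re separable_inner_im
  homog_poly_add homog_poly_scal : inner.

Lemma inner_add_l f g h : homog_poly k f -> homog_poly k g -> homog_poly k h ->
  inner (fadd f g) h = Cplus (inner f h) (inner g h).
Proof.
  intros Hf Hg Hh. rewrite !innerE. apply C_ext; simpl; rewrite <- sph_int_plus by auto with inner;
    apply sph_int_ext; intros; unfold inner_re, inner_im, fadd; rewrite !on_sphE; simpl; ring.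
Qed.

Lemma inner_scal_l c f h : homog_poly k f -> homog_poly k h ->
  inner (fscal c f) h = Cmult c (inner f h).
Proof.
  intros Hf Hh. rewrite !innerE. destruct c as [c1 c2]. apply C_ext; simpl.
  - rewrite (sph_int_ext _ (fun p t => c1 * inner_re f h p t + (- c2) * inner_im f h p t)).
    + rewrite sph_int_plus, !sph_int_scal by auto with inner; ring.
    + intros. unfold inner_re, inner_im, fscal. rewrite !on_sphE. simpl. ring.
  - rewrite (sph_int_ext _ (fun p t => c1 * inner_im f h p t + c2 * inner_re f h p t)).
    + rewrite sph_int_plus, !sph_int_scal by auto with inner; ring.
    + intros. unfold inner_re, inner_im, fscal. rewrite !on_sphE. simpl. ring.
Qed.

Lemma inner_conj f g : homog_poly k f -> homog_poly k g -> inner g f = Cconj (inner f g).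
Proof.
  intros Hf Hg. rewrite !innerE. unfold Cconj; simpl. f_equal.
  - apply sph_int_ext; intros; unfold inner_re; ring.
  - rewrite (sph_int_ext _ (fun p t => (-1) * inner_im f g p t)) by (intros; unfold inner_im; ring).
    rewrite sph_int_scal by auto with inner; ring.
Qed.

Lemma inner_self_im f : snd (inner f f) = 0.
Proof.
  rewrite innerE; simpl. rewrite <- sph_int0. apply sph_int_ext; intros; unfold inner_im; ring.
Qed.

Lemma inner_self_ge0 f : homog_poly k f -> 0 <= fst (inner f f).
Proof.
  intros Hf. rewrite innerE; simpl. apply sph_int_ge0; auto with inner.
  intros; unfold inner_re; nra.
Qed.

Lemma inner_self_eq0_on_sph f : homog_poly k f -> fst (inner f f) = 0 ->
  forall p t, 0 < p < PI -> 0 < t < 2 * PI -> on_sph f p t = RtoC 0.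
Proof.
  intros Hf H0 p t Hp Ht.
  destruct (Req_dec (inner_re f f p t) 0) as [Hz|Hnz].
  - unfold inner_re in Hz. apply C_ext; simpl; nra.
  - exfalso. assert (0 < fst (inner f f)); [|lra].
    rewrite innerE; simpl. apply (sph_int_gt0 _ p t); auto with inner.
    + intros; unfold inner_re; nra.
    + unfold inner_re in *; nra.
Qed.

(** [f] vanishes on the open coordinate patch, hence on [y > 0] and [y < 0] by homogeneity,
    and on [y = 0] by continuity. *)
Lemma inner_self_eq0 f : homog_poly k f -> fst (inner f f) = 0 -> forall x y z, f x y z = RtoC 0.
Proof.
  intros Hf H0.
  assert (Hpos : forall x y z, 0 < y -> f x y z = RtoC 0).
  { intros x y z Hy.
    destruct (sph_coordinates x y z Hy) as (r & p & t & Hr & Hp & Ht & -> & -> & ->).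
    rewrite (homog_poly_homog k) by exact Hf.
    rewrite <- on_sphE, (inner_self_eq0_on_sph f Hf H0) by auto. cring. }
  assert (Hne : forall x y z, y <> 0 -> f x y z = RtoC 0).
  { intros x y z Hy. destruct (Rlt_or_le 0 y); [apply Hpos; auto|].
    replace x with ((-1) * (-x)) by ring. replace y with ((-1) * (-y)) by ring.
    replace z with ((-1) * (-z)) by ring.
    rewrite (homog_poly_homog k), Hpos by (auto || lra). cring. }
  intros x y z. destruct (Req_dec y 0) as [->|Hy]; [|auto].
  destruct (homog_poly_hpoly k f Hf) as [c Hc].
  apply C_ext; simpl.
  - apply (cont_eq0_at_0 (fun s => fst (f x s z))).
    + eapply cont_ext; [|apply (cont_hreal_y k (fun a b => fst (c a b)) x z)].
      intros s; rewrite Hc, Re_hpoly; reflexivity.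
    + intros s Hs; rewrite Hne; auto.
  - apply (cont_eq0_at_0 (fun s => snd (f x s z))).
    + eapply cont_ext; [|apply (cont_hreal_y k (fun a b => snd (c a b)) x z)].
      intros s; rewrite Hc, Im_hpoly; reflexivity.
    + intros s Hs; rewrite Hne; auto.
Qed.

Lemma inner_combo_l n a e h : (forall i, (i < n)%nat -> homog_poly k (e i)) -> homog_poly k h ->
  inner (combo n a e) h = csum n (fun i => Cmult (a i) (inner (e i) h)).
Proof.
  intros He Hh. induction n as [|n IH].
  - rewrite innerE. apply C_ext; simpl; rewrite <- sph_int0; apply sph_int_ext; intros;
      unfold inner_re, inner_im; rewrite !on_sphE; simpl; ring.
  - change (combo (S n) a e) with (fadd (combo n a e) (fscal (a n) (e n))). simpl.
    rewrite inner_add_l, inner_scal_l, IH by (intros; try apply homog_poly_scal;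
      try apply homog_poly_combo; auto; apply He; lia).
    reflexivity.
Qed.

Lemma inner_combo_r n a e h : (forall i, (i < n)%nat -> homog_poly k (e i)) -> homog_poly k h ->
  inner h (combo n a e) = csum n (fun i => Cmult (Cconj (a i)) (inner h (e i))).
Proof.
  intros He Hh. rewrite inner_conj, inner_combo_l, Cconj_csum by (auto using homog_poly_combo).
  apply csum_ext; intros i Hi. rewrite (inner_conj h (e i)) by auto.
  destruct (a i), (inner h (e i)); cring.
Qed.

Lemma inner_combo_orthonormal n a e l : orthonormal n e ->
  (forall i, (i < n)%nat -> homog_poly k (e i)) -> (l < n)%nat ->
  inner (combo n a e) (e l) = a l.
Proof.
  intros Ho He Hl. rewrite inner_combo_l by auto.
  rewrite (csum_ext _ _ (fun i => Cmult (a i) (kron i l))) by (intros; rewrite Ho; auto).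
  apply csum_kron; auto.
Qed.

End InnerProduct.

(** * Gram-Schmidt orthonormalisation *)

Definition in_span (n : nat) (e : nat -> fun3) (g : fun3) :=
  exists a, forall x y z, g x y z = combo n a e x y z.

Definition extend_fam (n : nat) (e : nat -> fun3) (e' : fun3) : nat -> fun3 :=
  fun i => if Nat.ltb i n then e i else e'.

Definition Cnorm2 (c : C) := fst c * fst c + snd c * snd c.

Lemma extend_fam_lt n e e' i : (i < n)%nat -> extend_fam n e e' i = e i.
Proof. intros H. unfold extend_fam. apply Nat.ltb_lt in H. rewrite H; reflexivity. Qed.

Lemma extend_fam_n n e e' : extend_fam n e e' n = e'.
Proof. unfold extend_fam. rewrite Nat.ltb_irrefl; reflexivity. Qed.

Lemma in_span_ext n e f g : (forall x y z, f x y z = g x y z) -> in_span n e f -> in_span n e g.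
Proof. intros H [a Ha]. exists a. intros; rewrite <- H; auto. Qed.

Lemma in_span_add n e f g : in_span n e f -> in_span n e g -> in_span n e (fadd f g).
Proof.
  intros [a Ha] [b Hb]. exists (fun i => Cplus (a i) (b i)). intros.
  unfold fadd, combo. rewrite Ha, Hb. unfold combo.
  rewrite <- csum_add. apply csum_ext; intros; cring.
Qed.

Lemma in_span_scal n e c f : in_span n e f -> in_span n e (fscal c f).
Proof.
  intros [a Ha]. exists (fun i => Cmult c (a i)). intros.
  unfold fscal, combo. rewrite Ha. unfold combo.
  rewrite <- csum_scal. apply csum_ext; intros; cring.
Qed.

Lemma in_span_combo n e p b g : (forall i, (i < p)%nat -> in_span n e (g i)) ->
  in_span n e (combo p b g).
Proof.
  induction p as [|p IH]; intros H.
  - exists (fun _ => RtoC 0). intros. symmetry; apply csum_eq0; intros; cring.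
  - change (in_span n e (fadd (combo p b g) (fscal (b p) (g p)))).
    apply in_span_add; [apply IH; intros; apply H; lia | apply in_span_scal, H; lia].
Qed.

Lemma in_span_widen n e n' e' g : in_span n e g -> (n <= n')%nat ->
  (forall i, (i < n)%nat -> e' i = e i) -> in_span n' e' g.
Proof.
  intros [a Ha] Hn He. exists (fun i => if Nat.ltb i n then a i else RtoC 0). intros.
  rewrite Ha. unfold combo. rewrite (csum_trunc n' n) by (auto; intros i Hi;
    replace (Nat.ltb i n) with false by (symmetry; apply Nat.ltb_ge; lia); cring).
  apply csum_ext; intros i Hi. rewrite He by auto. apply Nat.ltb_lt in Hi. rewrite Hi; reflexivity.
Qed.

Lemma in_span_self n e j : (j < n)%nat -> in_span n e (e j).
Proof.
  intros Hj. exists (fun i => kron i j). intros. unfold combo.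
  rewrite (csum_ext _ _ (fun i => Cmult (e i x y z) (kron i j))) by (intros; cring).
  rewrite csum_kron; auto.
Qed.

Section GramSchmidt.

Variable k : nat.
Variable V : fun3 -> Prop.
Hypothesis V_homog : forall f, V f -> homog_poly k f.
Hypothesis V_add : forall f g, V f -> V g -> V (fadd f g).
Hypothesis V_scal : forall c f, V f -> V (fscal c f).
Hypothesis V_zero : V fzero.

Lemma V_combo n a e : (forall i, (i < n)%nat -> V (e i)) -> V (combo n a e).
Proof.
  induction n as [|n IH]; intros H; [apply V_zero|].
  change (V (fadd (combo n a e) (fscal (a n) (e n)))).
  apply V_add; [apply IH; intros; apply H; lia | apply V_scal, H; lia].
Qed.

Definition residual (n : nat) (e : nat -> fun3) (w : fun3) : fun3 :=
  fadd w (fscal (RtoC (-1)) (combo n (fun i => inner w (e i)) e)).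

Lemma homog_poly_residual n e w : (forall i, (i < n)%nat -> homog_poly k (e i)) ->
  homog_poly k w -> homog_poly k (residual n e w).
Proof. intros. apply homog_poly_add, homog_poly_scal, homog_poly_combo; auto. Qed.

Lemma inner_residual n e w j : orthonormal n e -> (forall i, (i < n)%nat -> homog_poly k (e i)) ->
  homog_poly k w -> (j < n)%nat -> inner (residual n e w) (e j) = RtoC 0.
Proof.
  intros Ho He Hw Hj. unfold residual.
  rewrite (inner_add_l k), (inner_scal_l k), (inner_combo_orthonormal k) by
    (auto using homog_poly_scal, homog_poly_combo).
  cring.
Qed.

Lemma orthonormal_extend n e e' : orthonormal n e ->
  (forall i, (i < n)%nat -> homog_poly k (e i)) ->
  homog_poly k e' -> (forall j, (j < n)%nat -> inner e' (e j) = RtoC 0) -> inner e' e' = RtoC 1 ->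
  orthonormal (S n) (extend_fam n e e').
Proof.
  intros Ho He He' O1 O2 i j Hi Hj.
  destruct (Nat.eq_dec i n) as [->|Hin]; destruct (Nat.eq_dec j n) as [->|Hjn];
    rewrite ?extend_fam_n, ?extend_fam_lt by lia; unfold kron.
  - rewrite Nat.eqb_refl; auto.
  - replace (Nat.eqb n j) with false by (symmetry; apply Nat.eqb_neq; lia). apply O1; lia.
  - replace (Nat.eqb i n) with false by (symmetry; apply Nat.eqb_neq; lia).
    rewrite (inner_conj k), O1 by (first [solve [auto] | lia | apply He; lia]). cring.
  - apply Ho; lia.
Qed.

Lemma in_span_of_residual_eq0 n e w : (forall x y z, residual n e w x y z = RtoC 0) ->
  in_span n e w.
Proof.
  intros Hz. exists (fun i => inner w (e i)). intros x y z. specialize (Hz x y z).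
  unfold residual, fadd, fscal in Hz. revert Hz.
  destruct (w x y z), (combo n (fun i => inner w (e i)) e x y z). intros Hz.
  unfold Cplus, Cmult, RtoC in Hz; cbn [fst snd] in Hz. injection Hz; intros H2 H1.
  apply C_ext; cbn [fst snd]; lra.
Qed.

Lemma inner_normalise r : homog_poly k r -> 0 < fst (inner r r) ->
  exists nu, 0 < nu /\ inner (fscal (RtoC (/ nu)) r) (fscal (RtoC (/ nu)) r) = RtoC 1.
Proof.
  intros Hr Hs.
  assert (Hn : forall c, inner (fscal c r) (fscal c r) = Cmult c (Cconj (Cmult c (inner r r))))
    by (intros; rewrite (inner_scal_l k), (inner_conj k _ r), (inner_scal_l k)
          by auto using homog_poly_scal; reflexivity).
  pose proof (inner_self_im r) as Him.
  destruct (inner r r) as [q1 q2]. cbn [fst snd] in *. subst q2.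
  exists (sqrt q1). split; [apply sqrt_lt_R0; auto|]. rewrite Hn.
  pose proof (sqrt_sqrt q1 ltac:(lra)) as Hsq. pose proof (sqrt_lt_R0 q1 Hs).
  remember (sqrt q1) as nu eqn:Enu. clear Enu. subst q1.
  apply C_ext; csimpl; field; lra.
Qed.

(** Either [w] lies in the span of [e], or its normalised residual extends [e]. *)
Lemma gram_schmidt_step n e w : orthonormal n e -> (forall i, (i < n)%nat -> V (e i)) -> V w ->
  in_span n e w \/ exists e', V e' /\ orthonormal (S n) (extend_fam n e e') /\
     in_span (S n) (extend_fam n e e') w /\
     exists beta a, forall x y z, e' x y z = Cplus (Cmult beta (w x y z)) (combo n a e x y z).
Proof.
  intros Ho HV Hw. set (c := fun i => inner w (e i)).
  assert (He : forall i, (i < n)%nat -> homog_poly k (e i)) by auto.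
  assert (Hr : homog_poly k (residual n e w)) by (apply homog_poly_residual; auto).
  destruct (Req_dec (fst (inner (residual n e w) (residual n e w))) 0) as [H0|H0].
  - left. apply in_span_of_residual_eq0, (inner_self_eq0 k); auto.
  - right. destruct (inner_normalise (residual n e w)) as (nu & Hnu & Hnorm); auto.
    { pose proof (inner_self_ge0 k _ Hr); lra. }
    exists (fscal (RtoC (/ nu)) (residual n e w)). split; [|split; [|split]].
    + apply V_scal, V_add; [exact Hw | apply V_scal, V_combo; auto].
    + apply orthonormal_extend; auto using homog_poly_scal.
      intros j Hj. rewrite (inner_scal_l k), inner_residual by auto. cring.
    + exists (fun i => if Nat.ltb i n then c i else RtoC nu). intros x y z.
      unfold combo. cbn [csum]. rewrite extend_fam_n, Nat.ltb_irrefl.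
      rewrite (csum_ext _ _ (fun i => Cmult (c i) (e i x y z))) by (intros i Hi;
        rewrite extend_fam_lt by auto; apply Nat.ltb_lt in Hi; rewrite Hi; reflexivity).
      unfold residual, fadd, fscal. fold c. fold (combo n c e x y z).
      destruct (w x y z), (combo n c e x y z). apply C_ext; csimpl; field; lra.
    + exists (RtoC (/ nu)), (fun i => Cmult (RtoC (- / nu)) (c i)). intros x y z.
      unfold residual, fadd, fscal. fold c. unfold combo.
      rewrite (csum_ext _ (fun i => Cmult (Cmult (RtoC (- / nu)) (c i)) (e i x y z))
        (fun i => Cmult (RtoC (- / nu)) (Cmult (c i) (e i x y z)))) by (intros; cring).
      rewrite csum_scal. destruct (w x y z), (csum n (fun i => Cmult (c i) (e i x y z))). cring.
Qed.

Lemma gram_schmidt_extend m u N h : orthonormal m u -> (forall i, (i < m)%nat -> V (u i)) ->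
  (forall j, (j < N)%nat -> V (h j)) ->
  exists n e, (m <= n)%nat /\ orthonormal n e /\ (forall i, (i < n)%nat -> V (e i)) /\
    (forall i, (i < m)%nat -> e i = u i) /\ (forall j, (j < N)%nat -> in_span n e (h j)).
Proof.
  intros Hou HVu. induction N as [|N IH]; intros Hh.
  - exists m, u. repeat split; auto. intros; lia.
  - destruct IH as (n & e & Hm & Ho & HV & Hu & Hs); [intros; apply Hh; lia|].
    destruct (gram_schmidt_step n e (h N) Ho HV (Hh N (Nat.lt_succ_diag_r N)))
      as [Hin | (e' & Ve' & Ho' & Hw & _)].
    + exists n, e. repeat split; auto.
      intros j Hj. destruct (Nat.eq_dec j N) as [->|]; auto. apply Hs; lia.
    + exists (S n), (extend_fam n e e'). repeat split; auto.
      * intros i Hi. destruct (Nat.eq_dec i n) as [->|].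
        -- rewrite extend_fam_n; auto.
        -- rewrite extend_fam_lt by lia. apply HV; lia.
      * intros i Hi. rewrite extend_fam_lt by lia. auto.
      * intros j Hj. destruct (Nat.eq_dec j N) as [->|]; auto.
        apply (in_span_widen n e); [apply Hs; lia | lia | intros; apply extend_fam_lt; auto].
Qed.

Definition lin_indep (N : nat) (h : nat -> fun3) :=
  forall a, (forall x y z, combo N a h x y z = RtoC 0) -> forall j, (j < N)%nat -> a j = RtoC 0.

Lemma lin_indep_not_in_span N h j : lin_indep N h -> (j < N)%nat -> ~ in_span j h (h j).
Proof.
  intros Hind Hj [b Hb].
  set (al := fun i => if Nat.ltb i j then b i else if Nat.eqb i j then RtoC (-1) else RtoC 0).
  assert (Hz : forall x y z, combo N al h x y z = RtoC 0).
  { intros. unfold combo. rewrite (csum_trunc N (S j)).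
    2: lia.
    2: { intros i Hi. unfold al.
         replace (Nat.ltb i j) with false by (symmetry; apply Nat.ltb_ge; lia).
         replace (Nat.eqb i j) with false by (symmetry; apply Nat.eqb_neq; lia). cring. }
    cbn [csum]. rewrite (csum_ext j _ (fun i => Cmult (b i) (h i x y z))).
    2: { intros i Hi. unfold al. apply Nat.ltb_lt in Hi. rewrite Hi; reflexivity. }
    unfold al. rewrite Nat.ltb_irrefl, Nat.eqb_refl, (Hb x y z). unfold combo.
    destruct (csum j (fun i => Cmult (b i) (h i x y z))). cring. }
  pose proof (Hind al Hz j Hj) as H1. unfold al in H1.
  rewrite Nat.ltb_irrefl, Nat.eqb_refl in H1. apply (f_equal fst) in H1. cbn [fst RtoC] in H1. lra.
Qed.

(** Invariant: after [j] steps, [f_0 .. f_(j-1)] and [h_0 .. h_(j-1)] span the same space;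
    independence of [h] excludes the degenerate case of [gram_schmidt_step]. *)
Lemma gram_schmidt_indep N h : (forall j, (j < N)%nat -> V (h j)) -> lin_indep N h ->
  exists f, orthonormal N f /\ (forall i, (i < N)%nat -> V (f i)) /\
    (forall j, (j < N)%nat -> in_span N f (h j)).
Proof.
  intros Hh Hind.
  assert (G : forall j, (j <= N)%nat -> exists f, orthonormal j f /\
     (forall i, (i < j)%nat -> V (f i)) /\
     (forall i, (i < j)%nat -> in_span j f (h i)) /\ (forall i, (i < j)%nat -> in_span j h (f i))).
  { induction j as [|j IH]; intros Hj.
    - exists (fun _ => fzero). repeat split; hnf; intros; lia.
    - destruct IH as (f & Ho & HV & Hs1 & Hs2); [lia|].
      destruct (gram_schmidt_step j f (h j) Ho HV (Hh j ltac:(lia)))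
        as [Hin | (e' & Ve' & Ho' & Hw & beta & a & Ha)].
      + exfalso. apply (lin_indep_not_in_span N h j Hind); [lia|].
        destruct Hin as [a Ha]. eapply in_span_ext; [intros; symmetry; apply Ha|].
        apply in_span_combo; auto.
      + exists (extend_fam j f e'). repeat split; auto.
        * intros i Hi. destruct (Nat.eq_dec i j) as [->|].
          -- rewrite extend_fam_n; auto.
          -- rewrite extend_fam_lt by lia. apply HV; lia.
        * intros i Hi. destruct (Nat.eq_dec i j) as [->|]; auto.
          apply (in_span_widen j f); [apply Hs1; lia | lia | intros; apply extend_fam_lt; auto].
        * intros i Hi. destruct (Nat.eq_dec i j) as [->|].
          -- rewrite extend_fam_n. eapply in_span_ext; [intros; symmetry; apply Ha|].
             apply (in_span_add (S j) h (fscal beta (h j)) (combo j a f)).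
             ++ apply in_span_scal, in_span_self; lia.
             ++ apply in_span_combo. intros l Hl.
                apply (in_span_widen j h); [apply Hs2 | lia |]; auto.
          -- rewrite extend_fam_lt by lia.
             apply (in_span_widen j h); [apply Hs2; lia | lia | auto]. }
  destruct (G N (Nat.le_refl N)) as (f & Ho & HV & Hs1 & _). exists f. auto.
Qed.

End GramSchmidt.

Lemma Cmult_conj_r c : Cmult c (Cconj c) = RtoC (Cnorm2 c).
Proof. unfold Cnorm2. cring. Qed.

Lemma bessel_inequality k n e g : orthonormal n e ->
  (forall i, (i < n)%nat -> homog_poly k (e i)) -> homog_poly k g ->
  rsum n (fun i => Cnorm2 (inner g (e i))) <= fst (inner g g).
Proof.
  intros Ho He Hg. set (c := fun i => inner g (e i)). set (P := combo n c e).
  set (r := residual n e g).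
  assert (HP : homog_poly k P) by (apply homog_poly_combo; auto).
  assert (Hr : homog_poly k r) by (apply homog_poly_residual; auto).
  assert (Hre : forall j, (j < n)%nat -> inner r (e j) = RtoC 0)
    by (intros; apply (inner_residual k); auto).
  assert (Hrr : inner r r = inner g r).
  { assert (HrP : inner P r = RtoC 0).
    { rewrite (inner_conj k r P) by auto. unfold P. rewrite (inner_combo_r k) by auto.
      rewrite csum_eq0; [cring|]. intros i Hi. rewrite Hre by auto. cring. }
    unfold r at 1, residual. fold c. fold P.
    rewrite (inner_add_l k), (inner_scal_l k), HrP by auto using homog_poly_scal.
    destruct (inner g r); cring. }
  assert (Hrg : inner r g =
    Cplus (inner g g) (Cmult (RtoC (-1)) (csum n (fun i => RtoC (Cnorm2 (c i)))))).
  { unfold r, residual. fold c. fold P.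
    rewrite (inner_add_l k), (inner_scal_l k) by auto using homog_poly_scal. f_equal. f_equal.
    unfold P. rewrite (inner_combo_l k) by auto.
    apply csum_ext; intros i Hi. rewrite <- Cmult_conj_r. f_equal. apply (inner_conj k); auto. }
  pose proof (inner_self_ge0 k r Hr) as Hge.
  rewrite Hrr, (inner_conj k r g), Hrg in Hge by auto.
  revert Hge. cbn [fst snd Cconj Cplus Cmult RtoC]. rewrite Re_csum. cbn [fst RtoC]. unfold c. lra.
Qed.

(** Count [sum_i sum_l |<e_i, f_l>|^2] by Parseval in [i] and by Bessel in [l]. *)
Lemma orthonormal_in_span_card_le k p f n e : orthonormal p f ->
  (forall l, (l < p)%nat -> homog_poly k (f l)) -> orthonormal n e ->
  (forall i, (i < n)%nat -> homog_poly k (e i)) ->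
  (forall i, (i < n)%nat -> in_span p f (e i)) -> (n <= p)%nat.
Proof.
  intros Hof Hf Hoe He Hs.
  assert (Parseval : forall i, (i < n)%nat -> rsum p (fun l => Cnorm2 (inner (e i) (f l))) = 1).
  { intros i Hi. destruct (Hs i Hi) as [b Hb]. apply fun3_ext in Hb.
    assert (E1 : inner (e i) (e i) = RtoC 1)
      by (rewrite Hoe by auto; unfold kron; rewrite Nat.eqb_refl; auto).
    assert (Hc : homog_poly k (combo p b f)) by (apply homog_poly_combo; auto).
    rewrite Hb in E1 |- *.
    rewrite (rsum_ext _ _ (fun l => Cnorm2 (b l)))
      by (intros; rewrite (inner_combo_orthonormal k); auto).
    rewrite (inner_combo_l k), (csum_ext _ _ (fun l => RtoC (Cnorm2 (b l)))) in E1 by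
      (auto; intros l Hl; rewrite (inner_conj k (combo p b f)), (inner_combo_orthonormal k) by auto;
       apply Cmult_conj_r).
    apply (f_equal fst) in E1. rewrite Re_csum in E1. exact E1. }
  assert (Bessel : forall l, (l < p)%nat -> rsum n (fun i => Cnorm2 (inner (f l) (e i))) <= 1).
  { intros l Hl. pose proof (bessel_inequality k n e (f l) Hoe He (Hf l Hl)) as H.
    rewrite Hof in H by auto. unfold kron in H. rewrite Nat.eqb_refl in H. exact H. }
  apply INR_le. rewrite <- (Rmult_1_r (INR n)), <- (Rmult_1_r (INR p)), <- !rsum_const.
  rewrite (rsum_ext n _ (fun i => rsum p (fun l => Cnorm2 (inner (e i) (f l))))) by
    (intros; symmetry; auto).
  rewrite rsum_swap. apply rsum_le. intros l Hl. eapply Rle_trans; [|apply (Bessel l Hl)].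
  right. apply rsum_ext. intros i Hi.
  rewrite (inner_conj k (f l) (e i)) by auto. unfold Cnorm2; cbn [fst snd Cconj]; ring.
Qed.

(** * Polynomials in one and three variables *)

Lemma is_derive_rsum n (F : nat -> R -> R) (dF : nat -> R) t :
  (forall i, is_derive (F i) t (dF i)) ->
  is_derive (fun s => rsum n (fun i => F i s)) t (rsum n dF).
Proof.
  intros H. induction n as [|n IH]; cbn [rsum].
  - apply (is_derive_const (V := R_NormedModule) 0 t).
  - apply (is_derive_plus (fun s => rsum n (fun i => F i s)) (F n) t); auto.
Qed.

Lemma is_derive_scal_pow q m t : is_derive (fun s => q * s ^ m) t (q * INR m * t ^ (m - 1)).
Proof. auto_derive; auto. rewrite Nat.sub_1_r. ring. Qed.

Lemma rsum_drop1 n G : G O = 0 -> G n = 0 -> rsum n G = rsum n (fun i => G (S i)).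
Proof.
  intros H0 Hn. pose proof (rsum_shift n G) as E. cbn [rsum] in E. rewrite H0, Hn in E. lra.
Qed.

Lemma Derive_poly1 n q t : (forall a, (n <= a)%nat -> q a = 0) ->
  Derive (fun s => rsum n (fun a => q a * s ^ a)) t = rsum n (fun a => INR (S a) * q (S a) * t ^ a).
Proof.
  intros Hq. rewrite (is_derive_unique _ _ (rsum n (fun a => q a * INR a * t ^ (a - 1)))).
  - rewrite rsum_drop1; [|cbn [INR]; ring | rewrite Hq by lia; ring].
    apply rsum_ext; intros a _. replace (S a - 1)%nat with a by lia. ring.
  - apply is_derive_rsum. intros a. apply is_derive_scal_pow.
Qed.

Lemma Derive2_poly1 n q x : (forall a, (n <= a)%nat -> q a = 0) ->
  Derive (fun t => Derive (fun s => rsum n (fun a => q a * s ^ a)) t) x =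
  rsum n (fun a => INR (S (S a)) * INR (S a) * q (S (S a)) * x ^ a).
Proof.
  intros Hq. erewrite Derive_ext; [|intros t; apply Derive_poly1, Hq]. rewrite Derive_poly1.
  - apply rsum_ext; intros; ring.
  - intros a Ha. rewrite Hq by lia. ring.
Qed.

(** Its value at [0] gives [q 0 = 0]; its derivative gives the rest by induction. *)
Lemma poly1_coef_eq0 n q : (forall a, (n <= a)%nat -> q a = 0) ->
  (forall s, rsum n (fun a => q a * s ^ a) = 0) -> forall a, q a = 0.
Proof.
  revert q; induction n as [|n IH]; intros q Hq H a; [apply Hq; lia|].
  destruct a as [|a].
  - specialize (H 0). rewrite rsum_shift, rsum_eq0 in H by (intros; cbn; ring). cbn in H. lra.
  - assert (Hd : forall s, rsum n (fun i => INR (S i) * q (S i) * s ^ i) = 0).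
    { intros s. rewrite <- (rsum_trunc (S n) n) by (auto; intros i Hi; rewrite Hq by lia; ring).
      rewrite <- Derive_poly1 by auto.
      rewrite (Derive_ext _ (fun _ => 0)) by auto. apply Derive_const. }
    assert (Hq' : forall i, (n <= i)%nat -> INR (S i) * q (S i) = 0)
      by (intros i Hi; rewrite Hq by lia; ring).
    pose proof (IH _ Hq' Hd a) as Ha.
    apply Rmult_integral in Ha as [Ha|Ha]; [exfalso; revert Ha; apply not_0_INR|]; auto.
Qed.

Definition box_poly (p : nat -> nat -> nat -> R) (n : nat) (x y z : R) : R :=
  rsum n (fun a => rsum n (fun b => rsum n (fun e => p a b e * x ^ a * y ^ b * z ^ e))).

Definition box_supported (p : nat -> nat -> nat -> R) (n : nat) :=
  forall a b e, (n <= a \/ n <= b \/ n <= e)%nat -> p a b e = 0.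

Lemma box_poly_x p n x y z : box_poly p n x y z =
  rsum n (fun a => rsum n (fun b => rsum n (fun e => p a b e * y ^ b * z ^ e)) * x ^ a).
Proof.
  apply rsum_ext; intros a _. rewrite Rmult_comm, <- rsum_scal. apply rsum_ext; intros b _.
  rewrite <- rsum_scal. apply rsum_ext; intros; ring.
Qed.

Lemma box_poly_swap_xy p n x y z : box_poly p n x y z = box_poly (fun b a e => p a b e) n y x z.
Proof.
  unfold box_poly. rewrite rsum_swap.
  do 2 (apply rsum_ext; intros). apply rsum_ext; intros; ring.
Qed.

Lemma box_poly_swap_yz p n x y z : box_poly p n x y z = box_poly (fun a e b => p a b e) n x z y.
Proof.
  apply rsum_ext; intros. rewrite rsum_swap. do 2 (apply rsum_ext; intros). ring.
Qed.

Lemma box_poly_swap_xz p n x y z : box_poly p n x y z = box_poly (fun e b a => p a b e) n z y x.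
Proof. rewrite box_poly_swap_xy, box_poly_swap_yz, box_poly_swap_xy. reflexivity. Qed.

Section BoxLaplacian.

Variable n : nat.

Lemma Derive2_box_x p x y z : box_supported p n ->
  Derive (fun t => Derive (fun s => box_poly p n s y z) t) x =
  box_poly (fun a b e => INR (S (S a)) * INR (S a) * p (S (S a)) b e) n x y z.
Proof.
  intros Hp.
  erewrite Derive_ext; [|intros t; apply Derive_ext; intros s; apply box_poly_x].
  rewrite Derive2_poly1, box_poly_x.
  - apply rsum_ext; intros a _. f_equal. rewrite <- !rsum_scal.
    apply rsum_ext; intros b _. rewrite <- rsum_scal. apply rsum_ext; intros; ring.
  - intros a Ha. apply rsum_eq0; intros b _. apply rsum_eq0; intros e _. rewrite Hp by lia; ring.
Qed.

Lemma Derive2_box_y p x y z : box_supported p n ->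
  Derive (fun t => Derive (fun s => box_poly p n x s z) t) y =
  box_poly (fun a b e => INR (S (S b)) * INR (S b) * p a (S (S b)) e) n x y z.
Proof.
  intros Hp.
  erewrite Derive_ext; [|intros t; apply Derive_ext; intros s; apply box_poly_swap_xy].
  rewrite Derive2_box_x, box_poly_swap_xy; [reflexivity|].
  intros a b e H; apply Hp; lia.
Qed.

Lemma Derive2_box_z p x y z : box_supported p n ->
  Derive (fun t => Derive (fun s => box_poly p n x y s) t) z =
  box_poly (fun a b e => INR (S (S e)) * INR (S e) * p a b (S (S e))) n x y z.
Proof.
  intros Hp.
  erewrite Derive_ext; [|intros t; apply Derive_ext; intros s; apply box_poly_swap_xz].
  rewrite Derive2_box_x, box_poly_swap_xz; [reflexivity|].
  intros a b e H; apply Hp; lia.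
Qed.

Definition lap_coef (p : nat -> nat -> nat -> R) (a b e : nat) : R :=
  INR (S (S a)) * INR (S a) * p (S (S a)) b e + INR (S (S b)) * INR (S b) * p a (S (S b)) e
  + INR (S (S e)) * INR (S e) * p a b (S (S e)).

Lemma lap3_box_poly p x y z : box_supported p n ->
  lap3 (box_poly p n) x y z = box_poly (lap_coef p) n x y z.
Proof.
  intros Hp. unfold lap3. rewrite Derive2_box_x, Derive2_box_y, Derive2_box_z by exact Hp.
  unfold box_poly. rewrite <- !rsum_add. apply rsum_ext; intros a _.
  rewrite <- !rsum_add. apply rsum_ext; intros b _.
  rewrite <- !rsum_add. apply rsum_ext; intros e _. unfold lap_coef; ring.
Qed.

Lemma box_poly_coef_eq0 p : box_supported p n -> (forall x y z, box_poly p n x y z = 0) ->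
  forall a b e, p a b e = 0.
Proof.
  intros Hp H a b e.
  assert (H1 : forall y z, rsum n (fun b => rsum n (fun e => p a b e * y ^ b * z ^ e)) = 0).
  { intros y z. revert a. apply (poly1_coef_eq0 n).
    - intros a Ha. apply rsum_eq0; intros. apply rsum_eq0; intros. rewrite Hp by lia; ring.
    - intros x. rewrite <- box_poly_x. apply H. }
  assert (H2 : forall z, rsum n (fun e => p a b e * z ^ e) = 0).
  { intros z. revert b. apply (poly1_coef_eq0 n).
    - intros b Hb. apply rsum_eq0; intros. rewrite Hp by lia; ring.
    - intros y. rewrite <- (H1 y z). apply rsum_ext; intros b _.
      rewrite Rmult_comm, <- rsum_scal. apply rsum_ext; intros; ring. }
  revert e. apply (poly1_coef_eq0 n); [intros e He; apply Hp; lia | exact H2].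
Qed.

End BoxLaplacian.

(** * Harmonic homogeneous polynomials *)

Definition homog_coef (k : nat) (r : nat -> nat -> R) (a b e : nat) : R :=
  if Nat.eqb (a + b + e) k then r a b else 0.

Lemma box_supported_homog_coef k r : box_supported (homog_coef k r) (S k).
Proof.
  intros a b e H. unfold homog_coef.
  replace (Nat.eqb (a + b + e) k) with false by (symmetry; apply Nat.eqb_neq; lia). reflexivity.
Qed.

Lemma box_supported_lap_coef p n : box_supported p n -> box_supported (lap_coef p) n.
Proof. intros Hp a b e H. unfold lap_coef. rewrite !Hp by lia. ring. Qed.

Lemma hreal_box_poly k r x y z : hreal k r x y z = box_poly (homog_coef k r) (S k) x y z.
Proof.
  apply rsum_ext; intros a Ha.
  rewrite (rsum_trunc (S k) (S (k - a))) by (try lia; intros b Hb;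
    apply rsum_eq0; intros e _; unfold homog_coef;
    replace (Nat.eqb (a + b + e) k) with false by (symmetry; apply Nat.eqb_neq; lia); ring).
  apply rsum_ext; intros b Hb.
  rewrite (rsum_ext _ _ (fun e =>
    if Nat.eqb e (k - a - b) then r a b * x ^ a * y ^ b * z ^ e else 0)).
  - rewrite rsum_delta by lia. ring.
  - intros e _. unfold homog_coef.
    destruct (Nat.eqb_spec (a + b + e) k), (Nat.eqb_spec e (k - a - b)); try lia; ring.
Qed.

Definition rec_lhs (k : nat) (r : nat -> nat -> R) (a b : nat) : R :=
  INR (S (S a)) * INR (S a) * r (S (S a)) b + INR (S (S b)) * INR (S b) * r a (S (S b))
  + INR (k - a - b) * INR (k - a - b - 1) * r a b.

(** [Delta (sum r_ab x^a y^b z^(k-a-b)) = 0] is equivalent to this recursion on the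
    coefficients, which determines [r] from its rows [a = 0] and [a = 1]. *)
Definition harmonic_rec (k : nat) (r : nat -> nat -> R) :=
  forall a b, (a + b + 2 <= k)%nat -> rec_lhs k r a b = 0.

Lemma lap_coef_homog_coef k r a b e :
  lap_coef (homog_coef k r) a b e = if Nat.eqb (a + b + e + 2) k then rec_lhs k r a b else 0.
Proof.
  unfold lap_coef, homog_coef, rec_lhs.
  destruct (Nat.eqb_spec (a + b + e + 2) k) as [E|E].
  - replace (Nat.eqb (S (S a) + b + e) k) with true by (symmetry; apply Nat.eqb_eq; lia).
    replace (Nat.eqb (a + S (S b) + e) k) with true by (symmetry; apply Nat.eqb_eq; lia).
    replace (Nat.eqb (a + b + S (S e)) k) with true by (symmetry; apply Nat.eqb_eq; lia).
    replace (k - a - b)%nat with (S (S e)) by lia.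
    replace (S (S e) - 1)%nat with (S e) by lia. ring.
  - replace (Nat.eqb (S (S a) + b + e) k) with false by (symmetry; apply Nat.eqb_neq; lia).
    replace (Nat.eqb (a + S (S b) + e) k) with false by (symmetry; apply Nat.eqb_neq; lia).
    replace (Nat.eqb (a + b + S (S e)) k) with false by (symmetry; apply Nat.eqb_neq; lia). ring.
Qed.

Lemma lap3_hreal_eq0_iff k r : (forall x y z, lap3 (hreal k r) x y z = 0) <-> harmonic_rec k r.
Proof.
  assert (E : hreal k r = box_poly (homog_coef k r) (S k))
    by (do 3 (apply functional_extensionality; intro); apply hreal_box_poly).
  pose proof (box_supported_homog_coef k r) as Hs.
  rewrite E. split.
  - intros H a b Hab.
    assert (H0 : forall x y z, box_poly (lap_coef (homog_coef k r)) (S k) x y z = 0)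
      by (intros; rewrite <- lap3_box_poly by exact Hs; apply H).
    pose proof (box_poly_coef_eq0 _ _ (box_supported_lap_coef _ _ Hs) H0 a b (k - a - b - 2)) as Hc.
    rewrite lap_coef_homog_coef in Hc.
    replace (Nat.eqb (a + b + (k - a - b - 2) + 2) k) with true in Hc
      by (symmetry; apply Nat.eqb_eq; lia). exact Hc.
  - intros H x y z. rewrite lap3_box_poly by exact Hs.
    apply rsum_eq0; intros a _. apply rsum_eq0; intros b _. apply rsum_eq0; intros e _.
    rewrite lap_coef_homog_coef.
    destruct (Nat.eqb_spec (a + b + e + 2) k); [rewrite H by lia|]; ring.
Qed.

Lemma harmonic_rec_lin k r1 r2 al be : harmonic_rec k r1 -> harmonic_rec k r2 ->
  harmonic_rec k (fun a b => al * r1 a b + be * r2 a b).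
Proof.
  intros H1 H2 a b H. transitivity (al * rec_lhs k r1 a b + be * rec_lhs k r2 a b).
  - unfold rec_lhs; ring.
  - rewrite H1, H2 by exact H; ring.
Qed.

Lemma harmonic_rec_ext k r1 r2 : (forall a b, r1 a b = r2 a b) ->
  harmonic_rec k r1 -> harmonic_rec k r2.
Proof. intros E H a b Hab. unfold rec_lhs. rewrite <- !E. apply H; auto. Qed.

Lemma harmonic_rec_rsum k N (r : nat -> nat -> nat -> R) (be : nat -> R) :
  (forall j, (j < N)%nat -> harmonic_rec k (r j)) ->
  harmonic_rec k (fun a b => rsum N (fun j => be j * r j a b)).
Proof.
  induction N as [|N IH]; intros H.
  - intros a b _. unfold rec_lhs; cbn [rsum]; ring.
  - apply (harmonic_rec_ext k (fun a b => 1 * rsum N (fun j => be j * r j a b) + be N * r N a b));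
      [intros; cbn [rsum]; ring|].
    apply harmonic_rec_lin; [apply IH; intros; apply H; lia | apply H; lia].
Qed.

Lemma harmonic_rec_eq0 k t : harmonic_rec k t ->
  (forall b, (b <= k)%nat -> t O b = 0) -> (forall b, (b + 1 <= k)%nat -> t 1%nat b = 0) ->
  forall a b, (a + b <= k)%nat -> t a b = 0.
Proof.
  intros HR H0 H1.
  assert (G : forall a, (forall b, (a + b <= k)%nat -> t a b = 0) /\
                        (forall b, (S a + b <= k)%nat -> t (S a) b = 0)).
  { induction a as [|a [IH1 IH2]]; [split; auto; intros; apply H1; lia|]. split; auto.
    intros b Hb. pose proof (HR a b ltac:(lia)) as E. unfold rec_lhs in E.
    rewrite !IH1 in E by lia.
    assert (INR (S (S a)) * INR (S a) <> 0)
      by (apply Rmult_integral_contrapositive; split; apply not_0_INR; lia).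
    apply (Rmult_eq_reg_l (INR (S (S a)) * INR (S a))); auto. lra. }
  intros a b Hab. apply (proj1 (G a)); auto.
Qed.

Lemma SH_iff k f : SH k f <-> exists c, (forall x y z, f x y z = hpoly k c x y z) /\
  harmonic_rec k (fun a b => fst (c a b)) /\ harmonic_rec k (fun a b => snd (c a b)).
Proof.
  assert (Hlap : forall c (part : C -> R),
    (forall x y z, part (hpoly k c x y z) = hreal k (fun a b => part (c a b)) x y z) ->
    forall x y z, lap3 (fun a b e => part (hpoly k c a b e)) x y z
                  = lap3 (hreal k (fun a b => part (c a b))) x y z).
  { intros c part Hp x y z. f_equal. do 3 (apply functional_extensionality; intro). apply Hp. }
  split.
  - intros [Hh Hl]. destruct (homog_poly_hpoly k f Hh) as [c Hc]. exists c. split; auto.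
    rewrite (fun3_ext f (hpoly k c) Hc) in Hl.
    split; apply lap3_hreal_eq0_iff; intros x y z.
    + rewrite <- (Hlap c fst (Re_hpoly k c)). apply (Hl x y z).
    + rewrite <- (Hlap c snd (Im_hpoly k c)). apply (Hl x y z).
  - intros (c & Hc & H1 & H2). rewrite (fun3_ext f (hpoly k c) Hc).
    split; [exists c; reflexivity|]. intros x y z.
    rewrite (Hlap c fst (Re_hpoly k c)), (Hlap c snd (Im_hpoly k c)).
    split; apply lap3_hreal_eq0_iff; auto.
Qed.

Lemma SH_add k f g : SH k f -> SH k g -> SH k (fadd f g).
Proof.
  rewrite !SH_iff. intros (c & Hc & Hc1 & Hc2) (d & Hd & Hd1 & Hd2).
  exists (fun a b => Cplus (c a b) (d a b)).
  split; [intros; unfold fadd; rewrite Hc, Hd; apply hpoly_add|].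
  split.
  - eapply harmonic_rec_ext; [|apply (harmonic_rec_lin k _ _ 1 1 Hc1 Hd1)].
    intros; cbn [fst Cplus]; ring.
  - eapply harmonic_rec_ext; [|apply (harmonic_rec_lin k _ _ 1 1 Hc2 Hd2)].
    intros; cbn [snd Cplus]; ring.
Qed.

Lemma SH_scal k e f : SH k f -> SH k (fscal e f).
Proof.
  rewrite !SH_iff. intros (c & Hc & Hc1 & Hc2). exists (fun a b => Cmult e (c a b)).
  split; [intros; unfold fscal; rewrite Hc; apply hpoly_scal|]. split.
  - eapply harmonic_rec_ext; [|apply (harmonic_rec_lin k _ _ (fst e) (- snd e) Hc1 Hc2)].
    intros; cbn [fst snd Cmult]; ring.
  - eapply harmonic_rec_ext; [|apply (harmonic_rec_lin k _ _ (snd e) (fst e) Hc1 Hc2)].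
    intros; cbn [fst snd Cmult]; ring.
Qed.

Lemma SH_zero k : SH k fzero.
Proof.
  apply SH_iff. exists (fun _ _ => RtoC 0). split.
  - intros. symmetry; apply csum_eq0; intros; apply csum_eq0; intros; cring.
  - split; intros a b _; unfold rec_lhs; cbn [fst snd RtoC]; ring.
Qed.

Lemma SH_homog k f : SH k f -> homog_poly k f.
Proof. intros [H _]; exact H. Qed.

Lemma hpoly_coef_eq0 k c : (forall x y z, hpoly k c x y z = RtoC 0) ->
  forall a b, (a + b <= k)%nat -> c a b = RtoC 0.
Proof.
  intros H a b Hab.
  assert (G : forall r, (forall x y z, hreal k r x y z = 0) -> r a b = 0).
  { intros r Hr. pose proof (box_poly_coef_eq0 _ _ (box_supported_homog_coef k r)
      (fun x y z => eq_trans (eq_sym (hreal_box_poly k r x y z)) (Hr x y z)) a b (k - a - b)) as E.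
    unfold homog_coef in E.
    replace (Nat.eqb (a + b + (k - a - b)) k) with true in E by (symmetry; apply Nat.eqb_eq; lia).
    exact E. }
  apply C_ext.
  - apply (G (fun a b => fst (c a b))). intros. rewrite <- Re_hpoly, H. reflexivity.
  - apply (G (fun a b => snd (c a b))). intros. rewrite <- Im_hpoly, H. reflexivity.
Qed.

Lemma combo_hpoly k N (al : nat -> C) (cj : nat -> nat -> nat -> C) x y z :
  combo N al (fun j => hpoly k (cj j)) x y z =
  hpoly k (fun a b => csum N (fun j => Cmult (al j) (cj j a b))) x y z.
Proof.
  unfold combo, hpoly.
  rewrite (csum_ext N _ (fun j => csum (S k) (fun a => csum (S (k - a)) (fun b =>
    Cmult (al j) (Cmult (cj j a b) (RtoC (x ^ a * y ^ b * z ^ (k - a - b)))))))).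
  - rewrite csum_swap. apply csum_ext; intros a _. rewrite csum_swap. apply csum_ext; intros b _.
    rewrite (csum_ext N _ (fun j =>
      Cmult (RtoC (x ^ a * y ^ b * z ^ (k - a - b))) (Cmult (al j) (cj j a b)))).
    + rewrite csum_scal. destruct (csum N (fun j => Cmult (al j) (cj j a b))). cring.
    + intros j _. destruct (al j), (cj j a b). cring.
  - intros j _. rewrite <- csum_scal. apply csum_ext; intros a _.
    rewrite <- csum_scal. apply csum_ext; intros; reflexivity.
Qed.

Section HarmonicBasis.

Variable k : nat.

Fixpoint rec_solution (d0 d1 : nat -> R) (a : nat) : nat -> R :=
  match a with
  | O => d0
  | S O => d1
  | S (S a') => fun b =>
      - (INR (S (S b)) * INR (S b) * rec_solution d0 d1 a' (S (S b))
         + INR (k - a' - b) * INR (k - a' - b - 1) * rec_solution d0 d1 a' b)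
      / (INR (S (S a')) * INR (S a'))
  end.

Lemma harmonic_rec_solution d0 d1 : harmonic_rec k (rec_solution d0 d1).
Proof.
  intros a b _. unfold rec_lhs. cbn [rec_solution]. field. split; apply not_0_INR; lia.
Qed.

(** Indexed by the [2k+1] free entries [r 0 b] ([b <= k]) and [r 1 b] ([b < k]) of a
    solution of [harmonic_rec k]. *)
Definition basis_coef (j : nat) : nat -> nat -> R :=
  rec_solution (fun b => if Nat.eqb j b then 1 else 0)
               (fun b => if Nat.eqb j (S k + b) then 1 else 0).

Definition harmonic_basis (j : nat) : fun3 := hpoly k (fun a b => RtoC (basis_coef j a b)).

Definition row_data (r : nat -> nat -> R) (j : nat) : R :=
  if Nat.leb j k then r O j else r 1%nat (j - S k)%nat.

Lemma harmonic_rec_expand r : harmonic_rec k r -> forall a b, (a + b <= k)%nat ->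
  r a b = rsum (2 * k + 1) (fun j => row_data r j * basis_coef j a b).
Proof.
  intros Hr a b Hab.
  set (t := fun a b =>
    1 * r a b + (-1) * rsum (2 * k + 1) (fun j => row_data r j * basis_coef j a b)).
  assert (Ht : harmonic_rec k t).
  { apply harmonic_rec_lin; auto. apply harmonic_rec_rsum. intros; apply harmonic_rec_solution. }
  enough (t a b = 0) by (unfold t in *; lra).
  apply (harmonic_rec_eq0 k t Ht); auto.
  - intros b0 Hb0. unfold t.
    rewrite (rsum_ext _ _ (fun j => if Nat.eqb j b0 then row_data r j else 0))
      by (intros j _; cbn [basis_coef rec_solution]; destruct (Nat.eqb j b0); ring).
    rewrite rsum_delta by lia. unfold row_data.
    replace (Nat.leb b0 k) with true by (symmetry; apply Nat.leb_le; lia). ring.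
  - intros b0 Hb0. unfold t.
    rewrite (rsum_ext _ _ (fun j => if Nat.eqb j (S k + b0) then row_data r j else 0))
      by (intros j _; cbn [basis_coef rec_solution]; destruct (Nat.eqb j (S k + b0)); ring).
    rewrite rsum_delta by lia. unfold row_data.
    replace (Nat.leb (S k + b0) k) with false by (symmetry; apply Nat.leb_gt; lia).
    replace (S k + b0 - S k)%nat with b0 by lia. ring.
Qed.

Lemma harmonic_basis_SH j : SH k (harmonic_basis j).
Proof.
  apply SH_iff. exists (fun a b => RtoC (basis_coef j a b)). split; [reflexivity|].
  split; cbn [fst snd RtoC]; [apply harmonic_rec_solution | intros a b _; unfold rec_lhs; ring].
Qed.

Lemma harmonic_basis_indep : lin_indep (2 * k + 1) harmonic_basis.
Proof.
  intros al Hz j Hj.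
  assert (Hc := hpoly_coef_eq0 k _
    (fun x y z => eq_trans (eq_sym (combo_hpoly k _ al _ x y z)) (Hz x y z))).
  destruct (Nat.le_gt_cases j k) as [Hjk|Hjk].
  - specialize (Hc O j ltac:(lia)). cbv beta in Hc.
    rewrite (csum_ext _ _ (fun i => Cmult (al i) (kron i j))), csum_kron in Hc by
      (lia || (intros i _; cbn [basis_coef rec_solution]; unfold kron;
               destruct (Nat.eqb i j); reflexivity)).
    exact Hc.
  - specialize (Hc 1%nat (j - S k)%nat ltac:(lia)). cbv beta in Hc.
    rewrite (csum_ext _ _ (fun i => Cmult (al i) (kron i j))), csum_kron in Hc by
      (lia || (intros i _; cbn [basis_coef rec_solution]; unfold kron;
               replace (S k + (j - S k))%nat with j by lia; destruct (Nat.eqb i j); reflexivity)).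
    exact Hc.
Qed.

Lemma SH_in_span_harmonic_basis f : SH k f -> in_span (2 * k + 1) harmonic_basis f.
Proof.
  intros Hf. apply SH_iff in Hf as (c & Hc & H1 & H2).
  exists (fun j => (row_data (fun a b => fst (c a b)) j, row_data (fun a b => snd (c a b)) j)).
  intros x y z. rewrite Hc. unfold harmonic_basis. rewrite combo_hpoly.
  apply csum_ext; intros a Ha. apply csum_ext; intros b Hb. f_equal. apply C_ext.
  - rewrite Re_csum, (harmonic_rec_expand _ H1) by lia. apply rsum_ext; intros; cbn; ring.
  - rewrite Im_csum, (harmonic_rec_expand _ H2) by lia. apply rsum_ext; intros; cbn; ring.
Qed.

End HarmonicBasis.

Lemma extend_to_ONB_SH k m u : orthonormal m u -> (forall i, (i < m)%nat -> SH k (u i)) ->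
  exists e, ONB_SH k e /\ (forall i, (i < m)%nat -> e i = u i).
Proof.
  intros Ho Hu.
  pose proof (SH_homog k) as VH. pose proof (SH_add k) as VA.
  pose proof (SH_scal k) as VS. pose proof (SH_zero k) as VZ.
  pose proof (harmonic_basis_SH k) as Hb.
  destruct (gram_schmidt_indep k (SH k) VH VA VS VZ (2 * k + 1) (harmonic_basis k) (fun j _ => Hb j)
              (harmonic_basis_indep k)) as (f & Hof & HVf & Hsf).
  destruct (gram_schmidt_extend k (SH k) VH VA VS VZ m u (2 * k + 1) (harmonic_basis k) Ho Hu
              (fun j _ => Hb j))
    as (n & e & Hm & Hoe & HVe & Hpre & Hse).
  assert (Hspan : forall p g, (forall j, (j < 2 * k + 1)%nat -> in_span p g (harmonic_basis k j)) ->
                              forall h, SH k h -> in_span p g h).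
  { intros p g Hg h Hh. destruct (SH_in_span_harmonic_basis k h Hh) as [a Ha].
    eapply in_span_ext; [intros; symmetry; apply Ha|]. apply in_span_combo; auto. }
  assert (n = 2 * k + 1)%nat as ->.
  { apply Nat.le_antisymm.
    - apply (orthonormal_in_span_card_le k _ f n e); auto.
    - apply (orthonormal_in_span_card_le k n e _ f); auto. }
  exists e. split; [|exact Hpre].
  split; [exact HVe | split; [exact Hoe | intros g Hg; exact (Hspan _ _ Hse g Hg)]].
Qed.

Lemma Lp_norm_ge0 p f : 0 <= Lp_norm p f.
Proof.
  unfold Lp_norm, Lp_norm_sph, rpow. destruct Rle_dec; [lra|]. apply Rlt_le, exp_pos.
Qed.

Lemma Lp_norm_sph_ge0 p g : 0 <= Lp_norm_sph p g.
Proof. unfold Lp_norm_sph, rpow. destruct Rle_dec; [lra|]. apply Rlt_le, exp_pos. Qed.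

Lemma mean_ge_prefix N m F c : (0 < N)%nat -> (m <= N)%nat -> (forall i, 0 <= F i) ->
  (forall i, (i < m)%nat -> c <= F i) -> INR m / INR N * c <= / INR N * rsum N F.
Proof.
  intros HN Hm HF Hc. assert (0 < INR N) by (apply lt_0_INR; auto).
  unfold Rdiv. rewrite Rmult_comm, <- Rmult_assoc, (Rmult_comm c), Rmult_comm.
  apply Rmult_le_compat_l; [apply Rlt_le, Rinv_0_lt_compat; auto|].
  rewrite <- rsum_const. eapply Rle_trans; [apply rsum_le; exact Hc|]. apply rsum_le_length; auto.
Qed.

(** For [x = D (2k+1) >= 3], [floor x >= x - 1 >= 2x/3]. *)
Lemma mD_bounds D k : D < 1 -> 3 <= D * INR (2 * k + 1) ->
  (mD D k <= 2 * k + 1)%nat /\ 2 / 3 * D <= INR (mD D k) / INR (2 * k + 1).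
Proof.
  intros HD1 H3. unfold mD. destruct (base_Int_part (D * INR (2 * k + 1))) as [B1 B2].
  assert (Hip : (0 <= Int_part (D * INR (2 * k + 1)))%Z) by (apply le_IZR; lra).
  assert (HN : 0 < INR (2 * k + 1)) by (apply lt_0_INR; lia).
  rewrite (INR_IZR_INZ (Z.to_nat _)), Z2Nat.id by exact Hip. split.
  - apply INR_le. rewrite INR_IZR_INZ, Z2Nat.id by exact Hip.
    assert (D * INR (2 * k + 1) < INR (2 * k + 1)) by nra. lra.
  - apply (Rle_div_r _ _ _ HN). lra.
Qed.

Lemma D_large D : 0 < D -> exists K, forall k, (K <= k)%nat -> 3 <= D * INR (2 * k + 1).
Proof.
  intros HD. destruct (archimed (3 / D)) as [Hup _].
  assert (0 < 3 / D) by (apply Rdiv_lt_0_compat; lra).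
  assert (Hup0 : (0 <= up (3 / D))%Z) by (apply le_IZR; lra).
  exists (Z.to_nat (up (3 / D))). intros k Hk.
  apply le_INR in Hk. rewrite INR_IZR_INZ, Z2Nat.id in Hk by exact Hup0.
  assert (INR k <= INR (2 * k + 1)) by (apply le_INR; lia).
  assert (3 / D * D = 3) by (field; lra). nra.
Qed.

Theorem corollary1p4 (D : R) (hD0 : 0 < D) (hD1 : D < 1)
  (hyp : exists K0 : nat, forall k : nat, (K0 <= k)%nat ->
     exists u : nat -> fun3,
       (forall i, (i < mD D k)%nat -> SH k (u i)) /\
       orthonormal (mD D k) u /\
       (forall i (p : R), (i < mD D k)%nat -> 2 < p <= 6 ->
          Lp_norm p (u i) >= / 2 * Lp_norm_sph p (Qk k))) :
  exists K0 : nat, forall k : nat, (K0 <= k)%nat ->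
    exists u : nat -> fun3,
      ONB_SH k u /\
      (forall p : R, 2 < p <= 6 ->
         / INR (2 * k + 1) * rsum (2 * k + 1) (fun i => Lp_norm p (u i))
           >= D / 3 * Lp_norm_sph p (Qk k)).
Proof.
  destruct hyp as [K1 HK1]. destruct (D_large D hD0) as [K2 HK2].
  exists (max K1 K2). intros k Hk.
  destruct (HK1 k ltac:(lia)) as (u & Hu & Ho & Hn).
  destruct (extend_to_ONB_SH k _ u Ho Hu) as (e & He & Hpre).
  exists e. split; [exact He|]. intros p Hp.
  destruct (mD_bounds D k hD1 (HK2 k ltac:(lia))) as [Hm Hratio].
  pose proof (Lp_norm_sph_ge0 p (Qk k)) as HQ.
  pose proof (mean_ge_prefix (2 * k + 1) (mD D k) (fun i => Lp_norm p (e i))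
    (/ 2 * Lp_norm_sph p (Qk k)) ltac:(lia) Hm (fun i => Lp_norm_ge0 p (e i))) as Hmean.
  enough (forall i, (i < mD D k)%nat -> / 2 * Lp_norm_sph p (Qk k) <= Lp_norm p (e i))
    by (specialize (Hmean H); nra).
  intros i Hi. rewrite Hpre by exact Hi. apply Rge_le, Hn; auto.
Qed.
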